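(* For every $\lambda\in P^+$ and every $\mathbf i\in\mathbb N^r\times\mathbb N^r$, $$W(\lambda)^{\ge\mathbf i}=U(\mathfrak n^-[t])^{\ge\mathbf i}\,w_\lambda,\qquad W(\lambda)^{>\mathbf i}=U(\mathfrak n^-[t])^{>\mathbf i}\,w_\lambda.$$
   Context: $\mathfrak g=\mathfrak{sl}_{r+1}(\mathbb C)$, $r\ge2$, $x^+_{i,j}=E_{i,j+1}$, $x^-_{i,j}=E_{j+1,i}$, $\mathfrak n^\pm=\bigoplus\mathbb Cx^\pm_{i,j}$; $\mathfrak g_{r-1}\cong\mathfrak{sl}_r$ the subalgebra generated by $x^\pm_{i,j}$, $1\le i\le j\le r-1$, $\mathfrak n^-_{r-1}=\bigoplus_{1\le i\le j\le r-1}\mathbb Cx^-_{i,j}$; $\mathfrak a[t]=\mathfrak a\otimes\mathbb C[t]$. Weyl module $W(\lambda)$: generated by $w_\lambda$ with $\mathfrak n^+[t]w_\lambda=0$, $(\mathfrak h\otimes t\mathbb C[t])w_\lambda=0$, $hw_\lambda=\lambda(h)w_\lambda$, $(x^-_{i,i})^{m_i+1}w_\lambda=0$. $\mathbf F$: pairs $(\ell,\mathbf s)$, $\mathbf s=(\mathbf s(1)\le\dots\le\mathbf s(\ell))\in\mathbb N^\ell$, $|\mathbf s|=\sum\mathbf s(p)$; $\underline{\mathbf x}^-_r(\underline\ell,\underline{\mathbf s})=\prod_{i=1}^r\prod_p(x^-_{i,r}\otimes t^{\mathbf s_i(p)})$ (product over $i$ in increasing order), $|\underline{\mathbf s}|=(|\mathbf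 s_1|,..,|\mathbf s_r|)$. Order on $\mathbb N^r\times\mathbb N^r$: $(\underline\ell,\underline d)>(\underline\ell',\underline d')$ iff the first $s$ with $\ell_s\neq\ell'_s$ has $\ell_s<\ell'_s$, or $\underline\ell=\underline\ell'$ and the last $s$ with $d_s\ne d'_s$ has $d_s>d'_s$. Definitions: $W(\lambda)^{\ge\mathbf i}=\sum_{(\underline\ell,|\underline{\mathbf s}|)\ge\mathbf i}U(\mathfrak g_{r-1}[t])\underline{\mathbf x}^-_r(\underline\ell,\underline{\mathbf s})w_\lambda$, $U(\mathfrak n^-[t])^{\ge\mathbf i}=\sum_{(\underline\ell,|\underline{\mathbf s}|)\ge\mathbf i}U(\mathfrak n^-_{r-1}[t])\underline{\mathbf x}^-_r(\underline\ell,\underline{\mathbf s})$ (sums over $(\underline\ell,\underline{\mathbf s})\in\mathbf F^r$), and similarly with $>$ in place of $\ge$. *)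

From HB Require Import structures.
From mathcomp Require Import all_boot all_order all_algebra.
From mathcomp Require Import Rstruct complex.
Set Implicit Arguments. Unset Strict Implicit. Unset Printing Implicit Defensive.
Import Order.TTheory GRing.Theory Num.Theory.
Local Open Scope ring_scope.

Definition C : numClosedFieldType := Rdefinitions.R[i].

Section Weyl.
Variable r : nat.
(* gl_{r+1}(C): (r+1)x(r+1) matrices, 0-indexed by 'I_(r.+1).
   sl_{r+1} = trace-zero matrices.
   Paper (1-indexed) E_{a,b} is delta_mx (a-1) (b-1) here. *)
Notation Mat := 'M[C]_(r.+1).

Definition in_sl (A : Mat) : Prop := \tr A = 0.

(* g_{r-1} ~ sl_r : trace zero matrices supported on the first r rows/columns *)
Definition in_g_rm1 (A : Mat) : Prop :=
  \tr A = 0 /\ forall a b : 'I_(r.+1), (a == ord_max) || (b == ord_max) -> A a b = 0.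

(* spanning set of n^-_{r-1}: x^-_{i,j} = E_{j+1,i}, 1 <= i <= j <= r-1;
   0-indexed: delta_mx a b with b < a < r. *)
Definition in_nminus_rm1_basis (A : Mat) : Prop :=
  exists a b : 'I_(r.+1), (b < a)%N /\ (a < r)%N /\ A = delta_mx a b.

Definition in_cartan (h : Mat) : Prop := is_diag_mx h /\ \tr h = 0.

(* A representation of the current algebra g[t] = sl_{r+1} (x) C[t] on V:
   act A k is the action of A (x) t^k  (A in sl_{r+1}, k in N). *)
Definition current_module (V : lmodType C) (act : Mat -> nat -> V -> V) : Prop :=
  [/\ (forall A k (a : C) (u v : V), act A k (a *: u + v) = a *: act A k u + act A k v),
      (forall A B k (a : C) (v : V), in_sl A -> in_sl B ->
          act (a *: A + B) k v = a *: act A k v + act B k v) &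
      (forall A B k l (v : V), in_sl A -> in_sl B ->
          act (A *m B - B *m A) (k + l) v = act A k (act B l v) - act B l (act A k v))].

(* the dominant weight lambda = sum_i m_i omega_i, lambda(h_i) = m_i
   (h_i = E_ii - E_{i+1,i+1}); for h in h:
   lambda(h) = sum_{i<r} m_i (h_00 + ... + h_ii) (0-indexed). *)
Definition weight (m : 'I_r -> nat) (h : Mat) : C :=
  \sum_(i < r) (m i)%:R * \sum_(j < r.+1 | (j <= i)%N) h j j.

Definition weyl_rels (m : 'I_r -> nat) (V : lmodType C)
    (act : Mat -> nat -> V -> V) (w : V) : Prop :=
  [/\ (* n^+[t] w = 0 ; n^+ spanned by E_{a,b}, a < b *)
      (forall (a b : 'I_(r.+1)) k, (a < b)%N -> act (delta_mx a b) k w = 0),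
      (forall h k, in_cartan h -> (0 < k)%N -> act h k w = 0),
      (forall h, in_cartan h -> act h 0 w = weight m h *: w) &
      (* (x^-_{i,i})^{m_i+1} w = 0, x^-_{i,i} = E_{i+1,i} *)
      (forall i : 'I_r,
          iter (m i).+1 (act (delta_mx (inord i.+1) (inord i)) 0) w = 0)].

(* the subspace U(a[t]) . S, where a is spanned by the matrices satisfying P:
   the smallest subspace containing S and stable under all act A k, P A. *)
Inductive gen_span (V : lmodType C) (act : Mat -> nat -> V -> V)
    (P : Mat -> Prop) (S : V -> Prop) : V -> Prop :=
| gen_base v : S v -> gen_span act P S v
| gen_zero : gen_span act P S 0
| gen_add u v : gen_span act P S u -> gen_span act P S v -> gen_span act P S (u + v)
| gen_scale (a : C) v : gen_span act P S v -> gen_span act P S (a *: v)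
| gen_act A k v : P A -> gen_span act P S v -> gen_span act P S (act A k v).

(* (V, act, w) is (isomorphic to) the Weyl module W(lambda): it satisfies the
   relations, is generated by w, and is universal among such modules. *)
Definition is_weyl_module (m : 'I_r -> nat) (V : lmodType C)
    (act : Mat -> nat -> V -> V) (w : V) : Prop :=
  [/\ current_module act, weyl_rels m act w,
      (forall v, gen_span act in_sl (fun u => u = w) v) &
      (forall (V' : lmodType C) (act' : Mat -> nat -> V' -> V') (w' : V'),
          current_module act' -> weyl_rels m act' w' ->
          exists f : V -> V',
            [/\ (forall (a : C) u v, f (a *: u + v) = a *: f u + f v),
                f w = w' &
                (forall A k v, in_sl A -> f (act A k v) = act' A k (f v))])].

(* x^-_{i,r} = E_{r+1,i}; 0-indexed (i : 'I_r stands for paper index i+1):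
   delta_mx ord_max i. *)
Definition xm_r (i : 'I_r) : Mat := delta_mx ord_max (inord i).

(* element of F^r: for each i a nondecreasing sequence s_i (length l_i = size) *)
Definition in_F (ss : 'I_r -> seq nat) : Prop := forall i, sorted leq (ss i).

(* x^-_r(l, s) applied to v = prod_{i=1}^r prod_p (x^-_{i,r} (x) t^{s_i(p)}) v,
   product over i in increasing order (leftmost factor is i = 1). *)
Definition xprod (V : lmodType C) (act : Mat -> nat -> V -> V)
    (ss : 'I_r -> seq nat) (v : V) : V :=
  foldr (fun i u => foldr (fun k u' => act (xm_r i) k u') u (ss i)) v (enum 'I_r).

Definition idx := (('I_r -> nat) * ('I_r -> nat))%type.

Definition idx_gt (x y : idx) : Prop :=
  (exists s : 'I_r, (forall t : 'I_r, (t < s)%N -> x.1 t = y.1 t) /\ (x.1 s < y.1 s)%N)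
  \/ ((forall t, x.1 t = y.1 t) /\
      exists s : 'I_r, (forall t : 'I_r, (s < t)%N -> x.2 t = y.2 t) /\ (y.2 s < x.2 s)%N).

Definition idx_ge (x y : idx) : Prop :=
  idx_gt x y \/ ((forall t, x.1 t = y.1 t) /\ (forall t, x.2 t = y.2 t)).

Definition idx_of (ss : 'I_r -> seq nat) : idx :=
  (fun i => size (ss i), fun i => sumn (ss i)).

Definition gens_ge (V : lmodType C) (act : Mat -> nat -> V -> V) (w : V)
    (ii : idx) (v : V) : Prop :=
  exists ss, in_F ss /\ idx_ge (idx_of ss) ii /\ v = xprod act ss w.
Definition gens_gt (V : lmodType C) (act : Mat -> nat -> V -> V) (w : V)
    (ii : idx) (v : V) : Prop :=
  exists ss, in_F ss /\ idx_gt (idx_of ss) ii /\ v = xprod act ss w.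

(* W(lambda)^{>= i} = sum U(g_{r-1}[t]) x^-_r(l,s) w *)
Definition W_ge V act w ii := gen_span act in_g_rm1 (@gens_ge V act w ii).
Definition W_gt V act w ii := gen_span act in_g_rm1 (@gens_gt V act w ii).
(* U(n^-[t])^{>= i} w = sum U(n^-_{r-1}[t]) x^-_r(l,s) w *)
Definition Un_ge_w V act w ii := gen_span act in_nminus_rm1_basis (@gens_ge V act w ii).
Definition Un_gt_w V act w ii := gen_span act in_nminus_rm1_basis (@gens_gt V act w ii).
End Weyl.

(* Since n^-_{r-1} ⊆ g_{r-1}, only the inclusion W(λ)^{≥i} ⊆ U(n^-[t])^{≥i} w_λ
   needs proof, i.e. that the right-hand side is stable under g_{r-1}[t].
   Moving a ⊗ t^k past a factor of n^-_{r-1}[t] costs a commutator that again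
   lies in g_{r-1}[t], so it suffices to apply a ⊗ t^k to a monomial
   x^-_r(ℓ,s) w_λ.  Strictly lower triangular a lie in n^-_{r-1}.  A Cartan
   element or E_{a,b} (a < b < r) kills or rescales w_λ, and commutes with
   x^-_{i,r} ⊗ t^p up to a multiple of x^-_{j,r} ⊗ t^{p+k} with j ≥ i: replacing
   such a factor either lowers ℓ lexicographically or keeps ℓ and raises |s|,
   so (ℓ,|s|) only grows.  As the x^-_{i,r} commute, the resulting words are
   monomials again after sorting. *)

From HB Require Import structures.
From mathcomp Require Import all_boot all_order all_algebra.
From mathcomp Require Import Rstruct complex.
Set Implicit Arguments. Unset Strict Implicit. Unset Printing Implicit Defensive.
Import Order.TTheory GRing.Theory Num.Theory.
Local Open Scope ring_scope.

Section Lexicographic.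
Variables (T : eqType) (before : rel T).
Hypothesis before_trans : transitive before.
Hypothesis before_total : forall s t, s != t -> before s t || before t s.

Definition lex_lt (f g : T -> nat) :=
  exists s, (forall t, before t s -> f t = g t) /\ (f s < g s)%N.

Lemma lex_lt_trans f g h : lex_lt f g -> lex_lt g h -> lex_lt f h.
Proof.
move=> [s1 [e1 l1]] [s2 [e2 l2]].
have [e12|/before_total/orP[b12|b21]] := eqVneq s1 s2.
- subst s2; exists s1; split=> [t ts1|]; first by rewrite e1 // e2.
  exact: ltn_trans l2.
- exists s1; split=> [t ts1|]; last by rewrite -(e2 _ b12).
  by rewrite e1 // e2 //; apply: before_trans b12.
- exists s2; split=> [t ts2|]; last by rewrite e1.
  by rewrite e1 ?e2 //; apply: before_trans b21.
Qed.

Lemma lex_lt_congr f f' g g' : f =1 f' -> g =1 g' -> lex_lt f g -> lex_lt f' g'.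
Proof.
by move=> ef eg [s [e l]]; exists s; split=> [t /e|]; rewrite -ef -eg.
Qed.

End Lexicographic.

Section IndexOrder.
Variable r : nat.
Implicit Types x y z : idx r.

Lemma ord_ltn_trans : transitive (fun s t : 'I_r => (s < t)%N).
Proof. by move=> ? ? ?; apply: ltn_trans. Qed.

Lemma ord_gtn_trans : transitive (fun s t : 'I_r => (t < s)%N).
Proof. by move=> ? ? ? h1 h2; apply: ltn_trans h2 h1. Qed.

Lemma ord_neq_ltgt (s t : 'I_r) : s != t -> (s < t)%N || (t < s)%N.
Proof. by rewrite -val_eqE; case: ltngtP. Qed.

Lemma ord_neq_gtlt (s t : 'I_r) : s != t -> (t < s)%N || (s < t)%N.
Proof. by rewrite orbC; apply: ord_neq_ltgt. Qed.

Lemma idx_gtE x y : idx_gt x y <->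
  lex_lt (fun s t : 'I_r => (s < t)%N) x.1 y.1 \/
  (x.1 =1 y.1 /\ lex_lt (fun s t : 'I_r => (t < s)%N) y.2 x.2).
Proof.
split=> -[h|[E [s [e l]]]]; [by left|right|by left|right].
all: by split=> //; exists s; split=> // t /e ->.
Qed.

Lemma idx_gt_trans x y z : idx_gt x y -> idx_gt y z -> idx_gt x z.
Proof.
rewrite !idx_gtE => -[l1|[e1 l1]] [l2|[e2 l2]].
- by left; apply: lex_lt_trans ord_ltn_trans ord_neq_ltgt _ _ _ l1 l2.
- by left; apply: lex_lt_congr l1.
- by left; apply: lex_lt_congr l2 => t; rewrite ?e1.
- right; split=> [t|]; first by rewrite e1 e2.
  exact: lex_lt_trans ord_gtn_trans ord_neq_gtlt _ _ _ l2 l1.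
Qed.

Lemma idx_ge_gt_trans x y z : idx_ge x y -> idx_gt y z -> idx_gt x z.
Proof.
case=> [gt_xy|[e1 e2]]; first exact: idx_gt_trans.
rewrite !idx_gtE => -[l|[e l]].
- by left; apply: lex_lt_congr l => t; rewrite ?e1.
- right; split=> [t|]; first by rewrite e1 e.
  by apply: lex_lt_congr l => t; rewrite ?e2.
Qed.

Lemma idx_ge_trans x y z : idx_ge x y -> idx_ge y z -> idx_ge x z.
Proof.
move=> ge_xy [gt_yz|[e1 e2]]; first by left; apply: idx_ge_gt_trans gt_yz.
case: ge_xy => [gt_xy|[f1 f2]]; last by right; split=> t; rewrite ?f1 ?f2.
left; apply/idx_gtE; case/idx_gtE: gt_xy => [l|[e l]].
- by left; apply: lex_lt_congr l => t; rewrite ?e1.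
- right; split=> [t|]; first by rewrite e e1.
  by apply: lex_lt_congr l => t; rewrite ?e2.
Qed.

End IndexOrder.

Section Matrices.
Variable r : nat.
Implicit Types A B D X : 'M[C]_r.+1.

Lemma in_sl0 : in_sl (0 : 'M[C]_r.+1).
Proof. by rewrite /in_sl mxtrace0. Qed.

Lemma in_slD A B : in_sl A -> in_sl B -> in_sl (A + B).
Proof. by rewrite /in_sl mxtraceD => -> ->; rewrite addr0. Qed.

Lemma in_slZ a A : in_sl A -> in_sl (a *: A).
Proof. by rewrite /in_sl mxtraceZ => ->; rewrite mulr0. Qed.

Lemma in_sl_commutator A B : in_sl (A *m B - B *m A).
Proof. by rewrite /in_sl linearB /= mxtrace_mulC subrr. Qed.

Lemma in_sl_delta (a b : 'I_r.+1) : a != b -> in_sl (delta_mx a b).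
Proof.
move=> ab; rewrite /in_sl /mxtrace; apply: big1 => k _; rewrite mxE.
by case: (eqVneq a k) => [<-|//]; rewrite (negbTE ab) andbF.
Qed.

Lemma in_g_rm1_sl A : in_g_rm1 A -> in_sl A.
Proof. by case. Qed.

Lemma in_g_rm1_commutator A B : in_g_rm1 A -> in_g_rm1 B ->
  in_g_rm1 (A *m B - B *m A).
Proof.
move=> [_ hA] [_ hB]; split=> [|a b /orP[] h]; first exact: in_sl_commutator.
all: rewrite !mxE !big1 ?subrr // => j _.
- by rewrite hB ?h ?mul0r.
- by rewrite hA ?h ?mul0r.
- by rewrite hA ?h ?orbT ?mulr0.
- by rewrite hB ?h ?orbT ?mulr0.
Qed.

Lemma ltn_ord_max (a : 'I_r.+1) : a != ord_max -> (a < r)%N.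
Proof. by rewrite -val_eqE /= ltn_neqAle -ltnS ltn_ord andbT. Qed.

Lemma in_nminus_rm1_g X : in_nminus_rm1_basis X -> in_g_rm1 X.
Proof.
move=> [a [b [lt_ba [lt_ar ->]]]]; split.
  by apply: in_sl_delta; rewrite -val_eqE /= gtn_eqF.
move=> x y /orP[] /eqP ->; rewrite mxE -!val_eqE /=.
- by rewrite gtn_eqF.
- by rewrite (gtn_eqF (ltn_trans lt_ba lt_ar)) andbF.
Qed.

Lemma xm_r_neq_max (i : 'I_r) : (inord i : 'I_r.+1) != ord_max.
Proof. by rewrite -val_eqE /= (inordK (ltnW (ltn_ord i))) ltn_eqF. Qed.

Lemma in_sl_xm_r (i : 'I_r) : in_sl (xm_r i).
Proof. by apply: in_sl_delta; rewrite eq_sym xm_r_neq_max. Qed.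

Lemma mul_xm_r (i j : 'I_r) : xm_r i *m xm_r j = 0.
Proof. by rewrite /xm_r mul_delta_mx_cond (negbTE (xm_r_neq_max i)) mulr0n. Qed.

Definition raises_xm_r (y : 'M[C]_r.+1) := forall i : 'I_r, exists c (j : 'I_r),
  (i <= j)%N /\ y *m xm_r i - xm_r i *m y = c *: xm_r j.

Lemma raises_xm_r_upper (a b : 'I_r.+1) :
  (a < b)%N -> (b < r)%N -> raises_xm_r (delta_mx a b).
Proof.
move=> lt_ab lt_br i; rewrite /xm_r !mul_delta_mx_cond.
have /negbTE -> : b != ord_max by rewrite -val_eqE /= ltn_eqF.
have [ia|] := eqVneq (inord i : 'I_r.+1) a; last by exists 0, i; rewrite mulr0n subrr scale0r.
exists (-1), (Ordinal lt_br); split.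
  by move: lt_ab; rewrite -ia (inordK (ltnW (ltn_ord i))) => /ltnW.
by rewrite /= inord_val mulr0n sub0r mulr1n scaleN1r.
Qed.

Lemma raises_xm_r_diag D : is_diag_mx D -> D ord_max ord_max = 0 -> raises_xm_r D.
Proof.
move=> /diag_mxP [d ->]; rewrite mxE eqxx mulr1n => d_max i.
exists (- d 0 (inord i)), i; split=> //.
rewrite mul_diag_mx mul_mx_diag; apply/matrixP => u v; rewrite !mxE.
have [<-|_] := eqVneq ord_max u; have [<-|_] := eqVneq (inord i : 'I_r.+1) v;
  rewrite ?mulr1n ?mulr0n ?mulr0 ?mul0r ?subrr //.
by rewrite d_max !mulr1 mul1r sub0r.
Qed.

End Matrices.

Arguments in_sl0 {r}.

Lemma perm_eq_fibers (T U : eqType) (f : T -> U) (s1 s2 : seq T) :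
  (forall u, perm_eq [seq x <- s1 | f x == u] [seq x <- s2 | f x == u]) ->
  perm_eq s1 s2.
Proof.
move=> fib; apply/allP => x _; apply/eqP; have /permP := fib (f x).
move/(_ (pred1 x)); rewrite !count_filter.
suff fx s : count (predI (pred1 x) (fun y => f y == f x)) s = count_mem x s.
  by rewrite !fx.
by apply: eq_count => y /=; case: eqP => // ->; rewrite eqxx.
Qed.

(* A word [l] lists the factors [(i, s)] of a product of [x^-_{i,r} (x) t^s]. *)
Section Words.
Variable r : nat.
Implicit Types (l : seq ('I_r * nat)) (ss : 'I_r -> seq nat).

Definition fiber l (t : 'I_r) := [seq p.2 | p <- l & p.1 == t].

Definition xword_idx l : idx r :=
  (fun t => size (fiber l t), fun t => sumn (fiber l t)).

Definition xshape l (t : 'I_r) := sort leq (fiber l t).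

Definition xword_of ss := flatten [seq [seq (i, k) | k <- ss i] | i <- enum 'I_r].

Lemma fiber_cat l1 l2 t : fiber (l1 ++ l2) t = fiber l1 t ++ fiber l2 t.
Proof. by rewrite /fiber filter_cat map_cat. Qed.

Lemma fiber_cons p l t :
  fiber (p :: l) t = if p.1 == t then p.2 :: fiber l t else fiber l t.
Proof. by rewrite /fiber /=; case: ifP. Qed.

Lemma filter_fst_fiber l t : [seq p <- l | p.1 == t] = [seq (t, k) | k <- fiber l t].
Proof.
rewrite /fiber; elim: l => //= -[i k] l IH.
by case: eqP => [/= ->|_] /=; [congr (_ :: _)|]; apply: IH.
Qed.

Lemma fiber_pairs (i t : 'I_r) (s : seq nat) :
  fiber [seq (i, k) | k <- s] t = if i == t then s else [::].
Proof.
rewrite /fiber; have [<-|ne] := eqVneq i t; elim: s => //= k s IH.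
  by rewrite eqxx /= IH.
by rewrite (negbTE ne).
Qed.

Lemma fiber_flatten (L : seq (seq ('I_r * nat))) t :
  fiber (flatten L) t = flatten [seq fiber p t | p <- L].
Proof. by elim: L => //= p L <-; rewrite fiber_cat. Qed.

Lemma fiber_xword_of ss t : fiber (xword_of ss) t = ss t.
Proof.
rewrite /xword_of fiber_flatten -map_comp.
have: t \in enum 'I_r by rewrite mem_enum.
elim: (enum 'I_r) (enum_uniq 'I_r) => //= i e IH /andP[i_e e_uniq].
rewrite in_cons fiber_pairs; have [eq_it|ne] := eqVneq i t; last first.
  by move=> /(IH e_uniq).
subst i; move=> _; rewrite -[RHS]cats0; congr (_ ++ _).
elim: e i_e {IH e_uniq} => //= j e IH; rewrite in_cons negb_or => /andP[tj t_e].
by rewrite fiber_pairs IH // eq_sym (negbTE tj).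
Qed.

Lemma perm_xword_of_xshape l : perm_eq l (xword_of (xshape l)).
Proof.
apply: (perm_eq_fibers (f := fst)) => t; rewrite !filter_fst_fiber fiber_xword_of.
by apply: perm_map; rewrite perm_sym perm_sort.
Qed.

Lemma xword_idx_raise l1 l2 (i j : 'I_r) s s' : (i <= j)%N -> (s <= s')%N ->
  idx_ge (xword_idx (l1 ++ (j, s') :: l2)) (xword_idx (l1 ++ (i, s) :: l2)).
Proof.
move=> le_ij le_ss.
have len p t : size (fiber (l1 ++ p :: l2) t) =
    (size (fiber l1 t) + (p.1 == t) + size (fiber l2 t))%N.
  by rewrite fiber_cat fiber_cons size_cat; case: eqP; rewrite ?addn0 ?addn1 ?addnS.
have deg p t : sumn (fiber (l1 ++ p :: l2) t) =
    (sumn (fiber l1 t) + (if p.1 == t then p.2 else 0) + sumn (fiber l2 t))%N.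
  by rewrite fiber_cat fiber_cons sumn_cat; case: eqP; rewrite ?addn0 //= addnA.
have ne_lt (u v : 'I_r) : (u < v)%N -> (v == u) = false.
  by move=> lt_uv; rewrite -val_eqE gtn_eqF.
have [lt_ij|le_ji] := ltnP i j.
  left; left; exists i; split=> [t lt_ti|] /=; rewrite !len /=.
    by rewrite (ne_lt _ _ lt_ti) (ne_lt _ _ (ltn_trans lt_ti lt_ij)).
  by rewrite eqxx (ne_lt _ _ lt_ij) addn0 addn1 ltn_add2r.
have {le_ij le_ji} -> : j = i by apply/val_inj/anti_leq; rewrite le_ij le_ji.
have E t : size (fiber (l1 ++ (i, s') :: l2) t) = size (fiber (l1 ++ (i, s) :: l2) t).
  by rewrite !len.
have [lt_ss|le_s's] := ltnP s s'.
  left; right; split=> //=; exists i; split=> [t lt_it|] /=; rewrite !deg /=.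
    by rewrite eq_sym (ne_lt _ _ lt_it).
  by rewrite eqxx ltn_add2r ltn_add2l.
have -> : s' = s by apply/anti_leq; rewrite le_ss le_s's.
by right.
Qed.

End Words.

Section CurrentModule.
Variables (r : nat) (V : lmodType C) (act : 'M[C]_r.+1 -> nat -> V -> V).
Hypothesis act_current : current_module act.
Implicit Types (A B : 'M[C]_r.+1) (l : seq ('I_r * nat)).

Lemma act0 A k : act A k 0 = 0.
Proof.
case: act_current => lin _ _.
by have := lin A k (-1) 0 0; rewrite scaler0 addr0 scaleN1r addNr.
Qed.

Lemma actD A k u v : act A k (u + v) = act A k u + act A k v.
Proof. by case: act_current => lin _ _; rewrite -{1}(scale1r u) lin scale1r. Qed.

Lemma actZ A k a u : act A k (a *: u) = a *: act A k u.
Proof. by case: act_current => lin _ _; rewrite -(addr0 (a *: u)) lin act0 addr0. Qed.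

Lemma act_mx0 k v : act 0 k v = 0.
Proof.
case: act_current => _ lin _.
by have := lin 0 0 k (-1) v in_sl0 in_sl0; rewrite scaler0 addr0 scaleN1r addNr.
Qed.

Lemma act_mxD A B k v :
  in_sl A -> in_sl B -> act (A + B) k v = act A k v + act B k v.
Proof. by case: act_current => _ lin _ slA slB; rewrite -{1}(scale1r A) lin // scale1r. Qed.

Lemma act_mxZ a A k v : in_sl A -> act (a *: A) k v = a *: act A k v.
Proof.
case: act_current => _ lin _ slA.
by have := lin A 0 k a v slA in_sl0; rewrite !addr0 act_mx0 addr0.
Qed.

Lemma act_mx_sum (I : Type) (s : seq I) (P : pred I) (F : I -> 'M[C]_r.+1) k v :
  (forall i, P i -> in_sl (F i)) ->
  act (\sum_(i <- s | P i) F i) k v = \sum_(i <- s | P i) act (F i) k v.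
Proof.
move=> slF; suff [] : in_sl (\sum_(i <- s | P i) F i) /\
    act (\sum_(i <- s | P i) F i) k v = \sum_(i <- s | P i) act (F i) k v by [].
apply: (big_ind2 (fun M u => in_sl M /\ act M k v = u)).
- by split; [exact: in_sl0 | exact: act_mx0].
- by move=> M1 u1 M2 u2 [sl1 <-] [sl2 <-]; split; [exact: in_slD | exact: act_mxD].
- by move=> i /slF.
Qed.

Lemma act_commutator A B k1 k2 v : in_sl A -> in_sl B ->
  act A k1 (act B k2 v) = act B k2 (act A k1 v) + act (A *m B - B *m A) (k1 + k2) v.
Proof. by case: act_current => _ _ br slA slB; rewrite br // addrC subrK. Qed.

Lemma act_xm_r_comm i j k1 k2 v :
  act (xm_r i) k1 (act (xm_r j) k2 v) = act (xm_r j) k2 (act (xm_r i) k1 v).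
Proof.
by rewrite act_commutator ?mul_xm_r ?subrr ?act_mx0 ?addr0 //; apply: in_sl_xm_r.
Qed.

Definition xword l (v : V) := foldr (fun p u => act (xm_r p.1) p.2 u) v l.

Lemma xword_cat l1 l2 v : xword (l1 ++ l2) v = xword l1 (xword l2 v).
Proof. exact: foldr_cat. Qed.

Lemma xword_rcons l i s v :
  xword (rcons l (i, s)) v = xword l (act (xm_r i) s v).
Proof. by rewrite -cats1 xword_cat. Qed.

Lemma xwordD l u v : xword l (u + v) = xword l u + xword l v.
Proof. by elim: l => //= p l ->; rewrite actD. Qed.

Lemma xwordZ l a v : xword l (a *: v) = a *: xword l v.
Proof. by elim: l => //= p l ->; rewrite actZ. Qed.

Lemma act_xm_r_xword l i k v :
  act (xm_r i) k (xword l v) = xword l (act (xm_r i) k v).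
Proof. by elim: l => //= p l <-; rewrite act_xm_r_comm. Qed.

Lemma xword_perm l1 l2 v : perm_eq l1 l2 -> xword l1 v = xword l2 v.
Proof.
elim: l1 l2 => [|p l1 IH] l2; first by rewrite perm_sym => /perm_nilP ->.
move=> pl; have p_l2 : p \in l2 by rewrite -(perm_mem pl) mem_head.
case/splitPr: p_l2 pl => l2a l2b.
rewrite perm_sym -cat1s perm_catCA perm_cons perm_sym => /IH eq_l1.
by rewrite -cat1s !xword_cat eq_l1 xword_cat /= act_xm_r_xword.
Qed.

Lemma xprodE ss v : xprod act ss v = xword (xword_of ss) v.
Proof.
rewrite /xprod /xword_of; elim: (enum 'I_r) => //= i e ->.
by rewrite xword_cat /xword foldr_map.
Qed.

End CurrentModule.

Lemma gen_span_mono r (V : lmodType C) (act : 'M[C]_r.+1 -> nat -> V -> V)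
    (P Q : 'M[C]_r.+1 -> Prop) (S : V -> Prop) v :
  (forall A, P A -> Q A) -> gen_span act P S v -> gen_span act Q S v.
Proof.
move=> PQ; elim=> {v} [v Sv| |u v _ IHu _ IHv|a v _ IH|A k v PA _ IH].
- exact: gen_base.
- exact: gen_zero.
- exact: gen_add.
- exact: gen_scale.
- by apply: gen_act; first exact: PQ.
Qed.

Section Stability.
Variables (r : nat) (V : lmodType C) (act : 'M[C]_r.+1 -> nat -> V -> V) (w : V).
Hypothesis act_current : current_module act.
Variable m : 'I_r -> nat.
Hypothesis rels : weyl_rels m act w.
Variable R : idx r -> Prop.
Hypothesis R_up : forall x y, idx_ge y x -> R x -> R y.
Implicit Types (A D : 'M[C]_r.+1) (l : seq ('I_r * nat)).

Definition monomials (v : V) :=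
  exists ss, in_F ss /\ R (idx_of ss) /\ v = xprod act ss w.

Definition Un_span := gen_span act (@in_nminus_rm1_basis r) monomials.

Definition scales_w y := forall k, exists c, act y k w = c *: w.

Lemma scales_w_upper (a b : 'I_r.+1) : (a < b)%N -> scales_w (delta_mx a b).
Proof. by case: rels => up _ _ _ lt_ab k; exists 0; rewrite up // scale0r. Qed.

Lemma scales_w_cartan D : in_cartan D -> scales_w D.
Proof.
case: rels => _ curr wt _ cD [|k]; first by exists (weight m D); rewrite wt.
by exists 0; rewrite curr // scale0r.
Qed.

Lemma Un_span_xword l : R (xword_idx l) -> Un_span (xword act l w).
Proof.
move=> Rl; apply: gen_base; exists (xshape l); split; [|split].
- by move=> i; apply: sort_sorted; exact: leq_total.
- apply: R_up Rl; right; split=> t /=; first exact: size_sort.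
  by apply: perm_sumn; rewrite perm_sort.
- by rewrite xprodE (xword_perm act_current w (perm_xword_of_xshape l)).
Qed.

Lemma Un_span_act_raising y k : in_sl y -> raises_xm_r y -> scales_w y ->
  forall l pre, R (xword_idx (pre ++ l)) ->
  Un_span (xword act pre (act y k (xword act l w))).
Proof.
move=> sl_y raise scale; elim=> [|[i s] l IH] pre Rl.
  have [c ->] := scale k; rewrite (xwordZ act_current) //; apply: gen_scale.
  by apply: Un_span_xword; rewrite cats0 in Rl.
rewrite /= (act_commutator act_current) //; last exact: in_sl_xm_r.
rewrite (xwordD act_current) //; apply: gen_add.
  by rewrite -xword_rcons; apply: IH; rewrite cat_rcons.
have [c [j [le_ij ->]]] := raise i; rewrite (act_mxZ act_current) //; last exact: in_sl_xm_r.
rewrite (xwordZ act_current) //; apply: gen_scale.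
rewrite -xword_rcons -xword_cat cat_rcons; apply: Un_span_xword.
by apply: R_up Rl; apply: xword_idx_raise; rewrite ?leq_addl.
Qed.

Lemma Un_span_act_delta (a b : 'I_r.+1) k l : a != b -> a != ord_max ->
  b != ord_max -> R (xword_idx l) -> Un_span (act (delta_mx a b) k (xword act l w)).
Proof.
move=> ab a_max b_max Rl; case: (ltngtP a b) => [lt_ab|lt_ba|/val_inj eq_ab].
- apply: (Un_span_act_raising k (in_sl_delta ab) _ (scales_w_upper lt_ab) (pre := [::]) Rl).
  exact: raises_xm_r_upper (ltn_ord_max b_max).
- apply: gen_act; last exact: Un_span_xword.
  by exists a, b; split=> //; split=> //; apply: ltn_ord_max.
- by rewrite eq_ab eqxx in ab.
Qed.

Lemma Un_span_act_xword A k l : in_g_rm1 A -> R (xword_idx l) ->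
  Un_span (act A k (xword act l w)).
Proof.
move=> gA Rl; have [slA A0] := gA.
pose D := diag_mx (\row_i A i i); pose M := A - D.
have trD : \tr D = \tr A by rewrite mxtrace_diag; apply: eq_bigr => i _; rewrite mxE.
have cD : in_cartan D by split; [exact: diag_mx_is_diag | rewrite trD].
have slM : in_sl M by rewrite /in_sl linearB /= trD subrr.
have Mab a b : M a b = if a == b then 0 else A a b.
  by rewrite !mxE; case: eqP => [->|_]; rewrite ?mulr1n ?subrr ?mulr0n ?subr0.
have slT a b : in_sl (M a b *: delta_mx a b).
  by rewrite Mab; case: eqVneq => ab; [rewrite scale0r; apply: in_sl0 | apply/in_slZ/in_sl_delta].
rewrite -(subrKC D A) (act_mxD act_current) //; last exact: cD.2.
apply: gen_add.
  apply: (Un_span_act_raising k cD.2 _ (scales_w_cartan cD) (pre := [::]) Rl).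
  by apply: raises_xm_r_diag; [exact: cD.1 | rewrite !mxE eqxx A0 ?eqxx].
rewrite -/M (matrix_sum_delta M) (act_mx_sum act_current) => [|a _]; last first.
  by apply: big_ind => //; [exact: in_sl0 | exact: in_slD].
apply: big_ind => [|u v|a _]; [exact: gen_zero | exact: gen_add |].
rewrite (act_mx_sum act_current) //.
apply: big_ind => [|u v|b _]; [exact: gen_zero | exact: gen_add |].
have [<-|ab] := eqVneq a b.
  by rewrite Mab eqxx scale0r (act_mx0 act_current); apply: gen_zero.
rewrite Mab (negbTE ab); have [->|nz] := eqVneq (A a b) 0.
  by rewrite scale0r (act_mx0 act_current); apply: gen_zero.
rewrite (act_mxZ act_current _ _ _ (in_sl_delta ab)); apply: gen_scale.
by apply: Un_span_act_delta => //; apply: contra nz => /eqP e; rewrite A0 ?e ?eqxx ?orbT.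
Qed.

Lemma Un_span_act v A k : Un_span v -> in_g_rm1 A -> Un_span (act A k v).
Proof.
move=> Uv; elim: Uv A k => {v}
  [v [ss [Fs [Rs ->]]]| |u v _ IHu _ IHv|a v _ IH|X j v nX _ IH] A k gA.
- rewrite xprodE; apply: Un_span_act_xword => //; apply: R_up Rs.
  by right; split=> t /=; rewrite fiber_xword_of.
- by rewrite (act0 act_current) //; apply: gen_zero.
- by rewrite (actD act_current) //; apply: gen_add; [apply: IHu | apply: IHv].
- by rewrite (actZ act_current) //; apply: gen_scale; apply: IH.
- have gX := in_nminus_rm1_g nX.
  rewrite (act_commutator act_current) //; try exact: in_g_rm1_sl.
  apply: gen_add; first by apply: gen_act => //; apply: IH.
  by apply: IH; apply: in_g_rm1_commutator.
Qed.

Lemma W_span_eq_Un_span v :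
  gen_span act (@in_g_rm1 r) monomials v <-> Un_span v.
Proof.
split; last exact/gen_span_mono/in_nminus_rm1_g.
elim=> {v} [v Sv| |u v _ IHu _ IHv|a v _ IH|A k v gA _ IH].
- exact: gen_base.
- exact: gen_zero.
- exact: gen_add.
- exact: gen_scale.
- exact: Un_span_act.
Qed.

End Stability.

Theorem proposition3p2 (r : nat) (hr : (2 <= r)%N) (m : 'I_r -> nat)
    (V : lmodType C) (act : 'M[C]_(r.+1) -> nat -> V -> V) (w : V)
    (HW : is_weyl_module m act w) (ii : idx r) :
  (forall v, W_ge act w ii v <-> Un_ge_w act w ii v) /\
  (forall v, W_gt act w ii v <-> Un_gt_w act w ii v).
Proof.
case: HW => act_current rels _ _; split=> v.
- apply: (W_span_eq_Un_span act_current rels (R := fun x => idx_ge x ii)).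
  by move=> x y; apply: idx_ge_trans.
- apply: (W_span_eq_Un_span act_current rels (R := fun x => idx_gt x ii)).
  by move=> x y; apply: idx_ge_gt_trans.
Qed.
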